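(* Let $G$ be an abelian group and let $(a_n)_{n\in\omega}$ be a $T$-sequence in $G$. Put $A=\{0,a_n,-a_n : n\in\omega\}$ and let $A_n$ denote the sum of $n$ copies of $A$. Then the family $\{F+A_n : F\in[G]^{<\omega},\ n\in\omega\}$ is a base for the group ideal $\mathcal{C}_{\tau(a_n)}$ (i.e. each $F+A_n$ belongs to $\mathcal{C}_{\tau(a_n)}$ and every member of $\mathcal{C}_{\tau(a_n)}$ is contained in some $F+A_n$), and $\mathcal{C}_{\tau(a_n)}=\mathcal{S}_{\tau(a_n)}$. If moreover $G$ is generated by $\{a_n:n\in\omega\}$, then $\{A_n:n\in\omega\}$ is a base for $\mathcal{C}_{\tau(a_n)}$.
   Context: A sequence $(a_n)_{n\in\omega}$ in an abelian group $G$ is a $T$-sequence if there exists a Hausdorff group topology on $G$ in which $(a_n)$ converges to $0$; $\tau(a_n)$ denotes the strongest group topology on $G$ in which $(a_n)$ converges to $0$. $[G]^{<\omega}$ is the family of finite subsets of $G$. For a topological group $(G,\tau)$, $\mathcal{C}_\tau$ is the family of precompact subsets of $G$ (subsets with compact closure), and $\mathcal{S}_\tau$ is the smallest group ideal on $G$ containing every set of the form $\{x\}\cup\{x_n:n\in\omega\}$ where $(x_n)$ is a sequence converging to $x$ in $(G,\tau)$. A group ideal on a group $G$ is a family $\mathcal{I}$ of subsets of $G$ containing all finite subsets and such that $A,B\in\mathcal{I}$, $C\subseteq A$ imply $AB^{-1}\in\mathcal{I}$ and $C\in\mathcal{I}$. *)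

From HB Require Import structures.
From mathcomp Require Import all_boot all_algebra.
From Stdlib Require List.
Set Implicit Arguments. Unset Strict Implicit. Unset Printing Implicit Defensive.
Import GRing.Theory.
Local Open Scope ring_scope.

Definition gset (T : Type) := T -> Prop.

Definition finite_set (G : eqType) (X : gset G) : Prop :=
  exists s : seq G, forall x, X x <-> x \in s.

Definition is_topology (T : Type) (O : gset (gset T)) : Prop :=
  O (fun _ => True) /\
  (forall U V, O U -> O V -> O (fun x => U x /\ V x)) /\
  (forall F : gset (gset T), (forall U, F U -> O U) ->
     O (fun x => exists U, F U /\ U x)).

(* group topology on an abelian group: (x,y) |-> x - y is continuous
   (continuity w.r.t. the product topology, at every point) *)
Definition group_topology (G : zmodType) (O : gset (gset G)) : Prop :=
  is_topology O /\
  forall x y (W : gset G), O W -> W (x - y) ->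
    exists U V, [/\ O U, O V, U x, V y &
      forall u v, U u -> V v -> W (u - v)].

Definition hausdorff (T : Type) (O : gset (gset T)) : Prop :=
  forall x y, x <> y -> exists U V, [/\ O U, O V, U x, V y &
      forall z, U z -> V z -> False].

Definition converges (T : Type) (O : gset (gset T)) (s : nat -> T) (l : T) : Prop :=
  forall U, O U -> U l -> exists N, forall n, (N <= n)%N -> U (s n).

Definition T_sequence (G : zmodType) (a : nat -> G) : Prop :=
  exists O, [/\ group_topology O, hausdorff O & converges O a 0].

Definition is_tau (G : zmodType) (a : nat -> G) (O : gset (gset G)) : Prop :=
  [/\ group_topology O, converges O a 0 &
    forall O', group_topology O' -> converges O' a 0 ->
      forall U, O' U -> O U].

Definition closure (T : Type) (O : gset (gset T)) (X : gset T) : gset T :=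
  fun x => forall U, O U -> U x -> exists y, U y /\ X y.

Definition compact (T : Type) (O : gset (gset T)) (K : gset T) : Prop :=
  forall F : gset (gset T), (forall U, F U -> O U) ->
    (forall x, K x -> exists U, F U /\ U x) ->
    exists s : list (gset T),
      (forall U, List.In U s -> F U) /\
      (forall x, K x -> exists U, List.In U s /\ U x).

(* C_tau : precompact subsets (compact closure) *)
Definition precompact (T : Type) (O : gset (gset T)) (X : gset T) : Prop :=
  compact O (closure O X).

Definition group_ideal (G : zmodType) (I : gset (gset G)) : Prop :=
  [/\ forall X, finite_set X -> I X,
      forall A B, I A -> I B -> I (fun z => exists x y, [/\ A x, B y & z = x - y])
    & forall A C, I A -> (forall z, C z -> A z) -> I C].

(* S_tau : smallest group ideal containing {x} u {x_n} for x_n -> x *)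
Definition S_ideal (G : zmodType) (O : gset (gset G)) : gset (gset G) :=
  fun X => forall I, group_ideal I ->
    (forall (s : nat -> G) (l : G), converges O s l ->
        I (fun z => z = l \/ exists n, z = s n)) ->
    I X.

Definition Aset (G : zmodType) (a : nat -> G) : gset G :=
  fun z => z = 0 \/ exists n, z = a n \/ z = - a n.

Fixpoint Asum (G : zmodType) (a : nat -> G) (n : nat) : gset G :=
  match n with
  | 0 => fun z => z = 0
  | m.+1 => fun z => exists x y, [/\ Aset a x, Asum a m y & z = x + y]
  end.

Definition plus_set (G : zmodType) (F X : gset G) : gset G :=
  fun z => exists f x, [/\ F f, X x & z = f + x].

Definition generated_by (G : zmodType) (a : nat -> G) : Prop :=
  forall H : gset G, H 0 -> (forall x y, H x -> H y -> H (x - y)) ->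
    (forall n, H (a n)) -> forall x, H x.

(* The proof has two
   halves.
   - Every F + A_k (F finite) is compact in any group topology with a_n -> 0:
     by induction on k, the tube lemma absorbs all but finitely many of the
     translates by +-a_n (compact_plus_Asum).  In a Hausdorff space, subsets
     of compact sets are precompact.
   - Conversely, tau(a_n) is finer than the group topology whose neighbourhood
     base at 0 consists of the sets U(m) = U_k (A^(m 0) + ... + A^(m (k-1))),
     where A^p = {0, +-a_n : n >= p} (section SequenceTopology).  If a
     precompact X were covered by no F + A_n, it would contain a sequence with
     x_n - x_j outside A_n for j < n; since each A_n is closed, a halving chain
     of neighbourhoods yields an m with no x_n - x_j in U(m)
     (separating_Unbhd), while covering the closure of X by finitely many open
     translates of U(m) forces two terms to be U(m)-close (pigeonhole).
   The identification of the precompact sets with the ideal S generated by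
   convergent sequences, and the case where the a_n generate G, then follow
   by elementary ideal manipulations. *)

From Pilot Require Import Defs.
From HB Require Import structures.
From mathcomp Require Import all_boot all_algebra.
From Stdlib Require Import Classical FunctionalExtensionality PropExtensionality.
From Stdlib Require Import ClassicalEpsilon.
From Stdlib Require List.
(* [Defs.closure] must shadow the graph closure of mathcomp's fingraph. *)
Import Defs.
Set Implicit Arguments. Unset Strict Implicit. Unset Printing Implicit Defensive.
Import GRing.Theory.
Local Open Scope ring_scope.

Lemma gset_ext (T : Type) (P Q : gset T) : (forall x, P x <-> Q x) -> P = Q.
Proof.
move=> H; apply: functional_extensionality => x.
by apply: propositional_extensionality.
Qed.

Section GeneralTopology.
Variables (T : Type) (O : gset (gset T)).

Lemma open_of_local (P : gset T) : is_topology O ->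
  (forall x, P x -> exists U, [/\ O U, U x & forall z, U z -> P z]) -> O P.
Proof.
move=> [_ [_ O_union]] H.
have -> : P = (fun x => exists U, (O U /\ forall z, U z -> P z) /\ U x).
  apply: gset_ext => x; split; last by move=> [U [[_ UP] Ux]]; apply: UP.
  by move=> /H [U [OU Ux UP]]; exists U.
by apply: O_union => U [].
Qed.

Lemma list_inter (s : list (gset T)) (Q : gset T -> T -> Prop) x : is_topology O ->
  (forall P, List.In P s -> exists W, [/\ O W, W x & forall z, W z -> Q P z]) ->
  exists W, [/\ O W, W x & forall P z, List.In P s -> W z -> Q P z].
Proof.
move=> [O_full [O_inter _]]; elim: s => [|P s IH] H; first by exists (fun _ => True).
have [W [OW Wx HW]] := IH (fun P' HP' => H P' (or_intror HP')).
have [W' [OW' W'x HW']] := H P (or_introl erefl).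
exists (fun z => W z /\ W' z); split => //; first exact: O_inter.
by move=> P' z [<-|Hs] [Wz W'z]; [apply: HW'|apply: HW].
Qed.

Lemma closure_complement (X : gset T) x :
  ~ closure O X x -> exists U, [/\ O U, U x & forall z, U z -> ~ closure O X z].
Proof.
move=> /not_all_ex_not [U HU].
have [OU Ux] : O U /\ U x by split; apply: NNPP => nH; apply: HU.
exists U; split => // z Uz /(_ U OU Uz) [y [Uy Xy]].
by apply: HU => _ _; exists y.
Qed.

Lemma compact_closed_subset (C D : gset T) :
  compact O C -> (forall x, D x -> C x) ->
  (forall x, ~ D x -> exists U, [/\ O U, U x & forall z, U z -> ~ D z]) ->
  compact O D.
Proof.
move=> C_compact DC D_closed; rewrite /compact => F F_open D_cover.
pose F' U := F U \/ (O U /\ forall z, U z -> ~ D z).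
have F'_open : forall U, F' U -> O U by move=> U [/F_open|[]].
have F'_cover : forall x, C x -> exists U, F' U /\ U x.
  move=> x Cx; case: (classic (D x)) => [/D_cover|/D_closed] [U].
    by move=> [FU Ux]; exists U; split => //; left.
  by move=> [OU Ux UD]; exists U; split => //; right.
have [s [sF' s_cover]] := C_compact F' F'_open F'_cover.
have [s' [s'F s's]] : exists s', (forall U, List.In U s' -> F U) /\
    (forall U, List.In U s -> F U -> List.In U s').
  elim: s {sF' s_cover} => [|U s [s' [s'F s's]]]; first by exists nil.
  case: (classic (F U)) => FU.
    exists (U :: s'); split; first by move=> V [<-|/s'F].
    by move=> V [<-|Vs] FV; [left|right; apply: s's].
  by exists s'; split => // V [<-|Vs] FV //; apply: s's.
exists s'; split => // x Dx.
have [U [Us Ux]] := s_cover x (DC x Dx).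
exists U; split => //; apply: s's => //.
by case: (sF' U Us) => // [[_ UD]]; exfalso; apply: (UD x).
Qed.

Lemma compact_complement (C : gset T) x :
  is_topology O -> hausdorff O -> compact O C -> ~ C x ->
  exists U, [/\ O U, U x & forall z, U z -> ~ C z].
Proof.
move=> O_top O_T2 C_compact nCx.
pose F V := O V /\ exists U, [/\ O U, U x & forall z, U z -> V z -> False].
have F_open : forall V, F V -> O V by move=> V [].
have F_cover : forall c, C c -> exists V, F V /\ V c.
  move=> c Cc; have xc : x <> c by move=> E; apply: nCx; rewrite E.
  have [U [V [OU OV Ux Vc UV]]] := O_T2 x c xc.
  by exists V; split => //; split => //; exists U.
have [s [sF s_cover]] := C_compact F F_open F_cover.
have [|U [OU Ux Us]] := @list_inter s (fun V z => ~ V z) x O_top _.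
  by move=> V /sF [_ [U [OU Ux UV]]]; exists U; split => // z Uz Vz; apply: UV z Uz Vz.
exists U; split => // z Uz Cz.
have [V [Vs Vz]] := s_cover z Cz.
exact: (Us V z Vs Uz).
Qed.

Lemma precompact_of_compact (C X : gset T) :
  is_topology O -> hausdorff O -> compact O C -> (forall x, X x -> C x) ->
  precompact O X.
Proof.
move=> O_top O_T2 C_compact XC.
apply: (compact_closed_subset C_compact); last exact: closure_complement.
move=> x clx; apply: NNPP => nCx.
have [U [OU Ux UC]] := compact_complement O_top O_T2 C_compact nCx.
have [y [Uy Xy]] := clx U OU Ux.
by apply: (UC y Uy); apply: XC.
Qed.

Lemma precompact_subset (X Y : gset T) :
  is_topology O -> hausdorff O -> precompact O Y -> (forall x, X x -> Y x) ->
  precompact O X.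
Proof.
move=> O_top O_T2 Y_pc XY; apply: (precompact_of_compact O_top O_T2 Y_pc).
by move=> x Xx U OU Ux; exists x; split => //; apply: XY.
Qed.

Lemma convergent_compact (s : nat -> T) l :
  converges O s l -> compact O (fun z => z = l \/ exists n, z = s n).
Proof.
move=> s_l F F_open cover.
have [U [FU Ul]] := cover l (or_introl erefl).
have [N s_U] := s_l U (F_open U FU) Ul.
have [L [LF L_head]] : exists L : list (gset T), (forall V, List.In V L -> F V) /\
    forall n, (n < N)%N -> exists V, List.In V L /\ V (s n).
  elim: N {s_U} => [|N [L [LF L_head]]]; first by exists nil.
  have [V [FV Vn]] := cover (s N) (or_intror (ex_intro _ N erefl)).
  exists (V :: L); split; first by move=> W [<-|/LF].
  move=> n; rewrite ltnS leq_eqVlt => /orP [/eqP ->|Hn]; first by exists V; split => //; left.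
  by have [W [WL Wn]] := L_head n Hn; exists W; split => //; right.
exists (U :: L); split; first by move=> W [<-|/LF].
move=> z [->|[n ->]]; first by exists U; split => //; left.
case: (leqP N n) => Hn; first by exists U; split => //; [left|apply: s_U].
by have [W [WL Wn]] := L_head n Hn; exists W; split => //; right.
Qed.

End GeneralTopology.

Lemma pigeonhole (T : Type) (s : list (gset T)) (x : nat -> T) N :
  (forall n, (N <= n)%N -> exists V, List.In V s /\ V (x n)) ->
  exists j n V, [/\ (j < n)%N, List.In V s, V (x j) & V (x n)].
Proof.
elim: s N => [|V s IH] N cover; first by have [V [[] _]] := cover N (leqnn N).
have drop_V M : (N <= M)%N -> (forall n, (M <= n)%N -> ~ V (x n)) ->
    exists j n V', [/\ (j < n)%N, List.In V' (V :: s), V' (x j) & V' (x n)].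
  move=> NM nV; have [|j [n [V' [jn V's V'j V'n]]]] := IH M.
    move=> n Mn; have [V' [[<-|V's] V'n]] := cover n (leq_trans NM Mn).
      by case: (nV n Mn).
    by exists V'.
  by exists j, n, V'; split => //; right.
case: (classic (exists n1, (N <= n1)%N /\ V (x n1))) => [[n1 [Nn1 Vn1]]|nV1].
  case: (classic (exists n2, (n1 < n2)%N /\ V (x n2))) => [[n2 [n12 Vn2]]|nV2].
    by exists n1, n2, V; split => //; left.
  apply: (drop_V n1.+1); first exact: leq_trans Nn1 (leqnSn n1).
  by move=> n n1n Vn; apply: nV2; exists n.
by apply: (drop_V N) => // n Nn Vn; apply: nV1; exists n.
Qed.

Section GroupTopology.
Variables (G : zmodType) (O : gset (gset G)).
Hypothesis O_group : group_topology O.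

Let O_top : is_topology O. Proof. by case: O_group. Qed.

Lemma open_full : O (fun _ => True).
Proof. by case: O_top. Qed.

Lemma open_inter U V : O U -> O V -> O (fun x => U x /\ V x).
Proof. by case: O_top => _ [O_inter _]; apply: O_inter. Qed.

Lemma open_opp W : O W -> O (fun z => W (- z)).
Proof.
move=> OW; apply: open_of_local => // z Wz.
have [U [V [OU OV U0 Vz UV]]] := O_group.2 0 z W OW ltac:(by rewrite sub0r).
by exists V; split => // v Vv; rewrite -sub0r; apply: UV.
Qed.

Lemma add_continuous W x y : O W -> W (x + y) ->
  exists U V, [/\ O U, O V, U x, V y & forall u v, U u -> V v -> W (u + v)].
Proof.
move=> OW Wxy.
have [U [V [OU OV Ux Vy UV]]] := O_group.2 x (- y) W OW ltac:(by rewrite opprK).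
exists U, (fun z => V (- z)); split => //; first exact: open_opp.
by move=> u v Uu Vv; rewrite -(opprK v); apply: UV.
Qed.

Lemma half_nbhd W : O W -> W 0 ->
  exists Z, [/\ O Z, Z 0 & forall u v, Z u -> Z v -> W (u + v)].
Proof.
move=> OW W0.
have [U [V [OU OV U0 V0 UV]]] := add_continuous (x := 0) (y := 0) OW ltac:(by rewrite addr0).
exists (fun z => U z /\ V z); split => //; first exact: open_inter.
by move=> u v [Uu _] [_ Vv]; apply: UV.
Qed.

Lemma halving_chain (W : nat -> gset G) : (forall n, O (W n) /\ W n 0) ->
  exists Z : nat -> gset G, forall n, [/\ O (Z n), Z n 0,
    (forall u v, Z n u -> Z n v -> W n (u + v)) &
    (forall u v, Z n.+1 u -> Z n.+1 v -> Z n (u + v))].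
Proof.
move=> W_nbhd.
have [half half_spec] : exists half : gset G -> gset G, forall P, O P -> P 0 ->
    [/\ O (half P), half P 0 & forall u v, half P u -> half P v -> P (u + v)].
  apply: (choice (fun P Z => O P -> P 0 ->
    [/\ O Z, Z 0 & forall u v, Z u -> Z v -> P (u + v)])) => P.
  case: (classic (O P /\ P 0)) => [[OP P0]|nP]; last by exists P => OP P0; case: nP.
  by have [Z HZ] := half_nbhd OP P0; exists Z.
pose fix Z n := if n is n'.+1 then half (fun z => Z n' z /\ W n z) else half (W 0%N).
have Z_zero := half_spec _ (W_nbhd 0%N).1 (W_nbhd 0%N).2.
have Z_succ n : O (Z n) -> Z n 0 -> [/\ O (Z n.+1), Z n.+1 0 &
    forall u v, Z n.+1 u -> Z n.+1 v -> Z n (u + v) /\ W n.+1 (u + v)].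
  by move=> OZ Z0; have [OW W0] := W_nbhd n.+1; apply: half_spec; [apply: open_inter|].
have Z_nbhd n : O (Z n) /\ Z n 0.
  by elim: n => [|n [OZ Z0]]; [case: Z_zero|case: (Z_succ n OZ Z0)].
exists Z => n; have [OZ Z0] := Z_nbhd n; have [_ _ ZZ] := Z_succ n OZ Z0.
split => // [|u v Zu Zv]; last by case: (ZZ u v Zu Zv).
case: n {OZ Z0 ZZ} => [|n]; first by case: Z_zero.
have [OZ Z0] := Z_nbhd n; have [_ _ ZZ] := Z_succ n OZ Z0.
by move=> u v Zu Zv; case: (ZZ u v Zu Zv).
Qed.

Lemma finite_inter_nbhd (P : nat -> G -> Prop) N :
  (forall n, (n < N)%N -> exists W, [/\ O W, W 0 & forall w, W w -> P n w]) ->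
  exists W, [/\ O W, W 0 & forall n w, (n < N)%N -> W w -> P n w].
Proof.
elim: N => [|N IH] H; first by exists (fun _ => True); split => //; exact: open_full.
have [W [OW W0 HW]] := IH (fun n Hn => H n (ltnW Hn)).
have [W' [OW' W'0 HW']] := H N (ltnSn N).
exists (fun z => W z /\ W' z); split => //; first exact: open_inter.
move=> n w; rewrite ltnS leq_eqVlt => /orP [/eqP ->|Hn] [Ww W'w].
- exact: HW'.
- exact: HW.
Qed.

Lemma tube (C V : gset G) : compact O C -> O V -> (forall c, C c -> V c) ->
  exists W, [/\ O W, W 0 & forall c w, C c -> W w -> V (c + w)].
Proof.
move=> C_compact OV CV.
pose F P := O P /\ exists W, [/\ O W, W 0 & forall u w, P u -> W w -> V (u + w)].
have F_open : forall P, F P -> O P by move=> P [].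
have F_cover : forall c, C c -> exists P, F P /\ P c.
  move=> c Cc; have Vc0 : V (c + 0) by rewrite addr0; apply: CV.
  have [U [W [OU OW Uc W0 UW]]] := add_continuous OV Vc0.
  by exists U; split => //; split => //; exists W.
have [s [sF s_cover]] := C_compact F F_open F_cover.
have [|W [OW W0 Ws]] := @list_inter _ O s (fun P w => forall u, P u -> V (u + w)) 0 O_top _.
  by move=> P /sF [_ [W [OW W0 PW]]]; exists W; split => // w Ww u Pu; apply: PW.
exists W; split => // c w Cc Ww.
have [P [Ps Pc]] := s_cover c Cc.
exact: (Ws P w Ps Ww c Pc).
Qed.

Lemma converges_pm (a : nat -> G) U : converges O a 0 -> O U -> U 0 ->
  exists N, forall n, (N <= n)%N -> U (a n) /\ U (- a n).
Proof.
move=> a0 OU U0.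
have [N1 H1] := a0 U OU U0.
have [N2 H2] := a0 (fun z => U (- z)) (open_opp OU) ltac:(by rewrite /= oppr0).
exists (maxn N1 N2) => n; rewrite geq_max => /andP [N1n N2n].
by split; [apply: H1|apply: H2].
Qed.

End GroupTopology.

Definition of_seq (T : eqType) (s : seq T) : gset T := fun x => x \in s.

Lemma finite_of_seq (G : eqType) (F : gset G) :
  finite_set F -> exists s : seq G, F = of_seq s.
Proof. by move=> [s Fs]; exists s; apply: gset_ext. Qed.

Section SymmetricSums.
Variables (G : zmodType) (a : nat -> G).

Lemma Aset_opp x : Aset a x -> Aset a (- x).
Proof.
move=> [->|[n [->|->]]]; first by left; rewrite oppr0.
- by right; exists n; right.
- by right; exists n; left; rewrite opprK.
Qed.

Lemma Asum0 k : Asum a k 0.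
Proof. by elim: k => [|k IH] //=; exists 0, 0; split => //; [left|rewrite addr0]. Qed.

Lemma Asum_opp k x : Asum a k x -> Asum a k (- x).
Proof.
elim: k x => [|k IH] x /=; first by move=> ->; rewrite oppr0.
move=> [u [v [Au Av ->]]]; exists (- u), (- v); split; [exact: Aset_opp|exact: IH|].
by rewrite opprD.
Qed.

Lemma Asum_add k j x y : Asum a k x -> Asum a j y -> Asum a (k + j) (x + y).
Proof.
elim: k x => [|k IH] x /=; first by move=> -> Hy; rewrite add0r.
move=> [u [v [Au Av ->]]] Hy; exists u, (v + y); split; [by []|exact: IH|].
by rewrite addrA.
Qed.

Lemma Asum_mono k j x : (k <= j)%N -> Asum a k x -> Asum a j x.
Proof.
by move=> /subnKC <- Hx; rewrite -[x]addr0; apply: Asum_add => //; apply: Asum0.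
Qed.

Lemma Asum_succ k z : Asum a k.+1 z <->
  Asum a k z \/ exists n, Asum a k (z - a n) \/ Asum a k (z + a n).
Proof.
split => [[x [y [[->|[n [->|->]]] Ay ->]]]|].
- by left; rewrite add0r.
- by right; exists n; left; rewrite addrC addKr.
- by right; exists n; right; rewrite addrC addNKr.
move=> [Az|[n [Az|Az]]].
- by exists 0, z; split => //; [left|rewrite add0r].
- by exists (a n), (z - a n); split => //; [right; exists n; left|rewrite addrC subrK].
- by exists (- a n), (z + a n); split => //; [right; exists n; right|rewrite addrC addrK].
Qed.

Definition spread (s : seq G) (N : nat) : seq G :=
  s ++ [seq f + a n | f <- s, n <- iota 0 N] ++ [seq f - a n | f <- s, n <- iota 0 N].

Lemma plus_Asum_succ (s : seq G) k N z : plus_set (of_seq s) (Asum a k.+1) z ->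
  (exists c n, [/\ plus_set (of_seq s) (Asum a k) c, (N <= n)%N &
                   z = c + a n \/ z = c - a n])
  \/ plus_set (of_seq (spread s N)) (Asum a k) z.
Proof.
move=> [f [y [fs /Asum_succ Ay ->]]].
have spread_s : f \in spread s N by rewrite mem_cat fs.
case: Ay => [Ay|[n An]]; first by right; exists f, y.
case: (leqP N n) => Nn.
  left; case: An => An.
    by exists (f + (y - a n)), n; split; [exists f, (y - a n)| |left; rewrite addrA subrK].
  by exists (f + (y + a n)), n; split; [exists f, (y + a n)| |right; rewrite addrA addrK].
have n_iota : n \in iota 0 N by rewrite mem_iota.
right; case: An => An.
  exists (f + a n), (y - a n); split => //; last by rewrite -addrA [a n + _]addrC subrK.
  by rewrite /of_seq !mem_cat (allpairs_f (fun f n => f + a n)) ?orbT.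
exists (f - a n), (y + a n); split => //; last by rewrite -addrA [- a n + _]addrC addrK.
by rewrite /of_seq !mem_cat (allpairs_f (fun f n => f - a n)) ?orbT.
Qed.

Lemma spread_plus_Asum (s : seq G) k N z :
  plus_set (of_seq (spread s N)) (Asum a k) z -> plus_set (of_seq s) (Asum a k.+1) z.
Proof.
have shift f x y : Aset a x -> Asum a k y -> of_seq s f ->
    plus_set (of_seq s) (Asum a k.+1) (f + x + y).
  by move=> Ax Ay fs; exists f, (x + y); split => //; [exists x, y|rewrite addrA].
move=> [f [y [+ Ay ->]]]; rewrite /of_seq !mem_cat => /orP [fs|/orP [] /allpairsP].
- by rewrite -[f]addr0; apply: shift => //; left.
- by move=> [[g n] [/= gs _ ->]]; apply: shift => //; right; exists n; left.
- by move=> [[g n] [/= gs _ ->]]; apply: shift => //; right; exists n; right.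
Qed.

End SymmetricSums.

Lemma compact_of_seq (T : eqType) (O : gset (gset T)) (s : seq T) : compact O (of_seq s).
Proof.
move=> F _ cover; elim: s cover => [|d s IH] cover; first by exists nil.
have [|L [LF L_cover]] := IH.
  by move=> x xs; apply: cover; rewrite /of_seq inE xs orbT.
have [U [FU Ud]] := cover d (mem_head d s).
exists (U :: L); split; first by move=> V [<-|/LF].
move=> x; rewrite /of_seq inE => /orP [/eqP ->|xs]; first by exists U; split => //; left.
by have [V [VL Vx]] := L_cover x xs; exists V; split => //; right.
Qed.

Section ConvergentSequence.
Variables (G : zmodType) (O : gset (gset G)) (a : nat -> G).
Hypotheses (O_group : group_topology O) (a0 : converges O a 0).

Lemma Asum_closed : hausdorff O -> forall k z, ~ Asum a k z ->
  exists W, [/\ O W, W 0 & forall w, W w -> ~ Asum a k (z - w)].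
Proof.
move=> O_T2; elim=> [|k IH] z nAz.
  have [U [V [OU OV Uz V0 UV]]] := O_T2 z 0 nAz.
  exists V; split => // w Vw /= /eqP; rewrite subr_eq0 => /eqP zw.
  by apply: (UV z) => //; rewrite zw.
have [W0 [OW0 W00 W0_sep]] := IH z (fun Az => nAz (Asum_mono (leqnSn k) Az)).
have [Z [OZ Z0 ZZ]] := half_nbhd O_group OW0 W00.
have [N a_Z] := converges_pm O_group a0 OZ Z0.
have [|W1 [OW1 W10 W1_sep]] := @finite_inter_nbhd _ O O_group
  (fun n w => ~ Asum a k (z - a n - w) /\ ~ Asum a k (z + a n - w)) N _.
  move=> n _.
  have [nA_minus nA_plus] : ~ Asum a k (z - a n) /\ ~ Asum a k (z + a n).
    by split => Az; apply: nAz; apply/Asum_succ; right; exists n; [left|right].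
  have [V1 [OV1 V10 V1_sep]] := IH _ nA_minus.
  have [V2 [OV2 V20 V2_sep]] := IH _ nA_plus.
  exists (fun w => V1 w /\ V2 w); split => //; first exact: open_inter.
  by move=> w [V1w V2w]; split; [apply: V1_sep|apply: V2_sep].
exists (fun w => Z w /\ W1 w); split => //; first exact: open_inter.
move=> w [Zw W1w] /Asum_succ [Azw|[n Azw]].
  by apply: (W0_sep w); first by rewrite -[w]addr0; apply: ZZ.
case: (leqP N n) => [Nn|nN].
  have [Zan Zman] := a_Z n Nn.
  case: Azw => Azw.
    by apply: (W0_sep (w + a n)); [apply: ZZ|rewrite opprD addrA].
  by apply: (W0_sep (w - a n)); [apply: ZZ|rewrite opprD opprK addrA].
have [sep1 sep2] := W1_sep n w nN W1w.
by case: Azw; rewrite addrAC; [apply: sep1|apply: sep2].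
Qed.

(* Every finite set plus A_k is compact (by induction on k, using the tube
   lemma to absorb all but finitely many of the translates by +-a_n). *)
Lemma compact_plus_Asum k (s : seq G) : compact O (plus_set (of_seq s) (Asum a k)).
Proof.
elim: k s => [|k IH] s.
  have -> : plus_set (of_seq s) (Asum a 0) = of_seq s; last exact: compact_of_seq.
  apply: gset_ext => z; split => [[f [y [fs /= -> ->]]]|zs]; first by rewrite addr0.
  by exists z, 0; split => //; rewrite addr0.
move=> F F_open cover.
have [|L0 [L0F L0_cover]] := IH s F F_open _.
  move=> z [f [y [fs Ay ->]]]; apply: cover; exists f, y; split => //.
  exact: Asum_mono (leqnSn k) Ay.
pose V z := exists U, List.In U L0 /\ U z.
have OV : O V.
  apply: open_of_local; first by case: O_group.
  move=> z [U [UL Uz]]; exists U; split => //; first by apply: F_open; apply: L0F.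
  by move=> z' Uz'; exists U.
have [W [OW W0 W_tube]] := tube O_group (IH s) OV L0_cover.
have [N a_W] := converges_pm O_group a0 OW W0.
have [|L1 [L1F L1_cover]] := IH (spread a s N) F F_open _.
  by move=> z /spread_plus_Asum; apply: cover.
exists (L0 ++ L1); split; first by move=> U /(List.in_app_or _ _ _) [/L0F|/L1F].
move=> z /(@plus_Asum_succ _ a s k N) [[c [n [sc Nn zc]]]|zs].
  have [a_n_W ma_n_W] := a_W n Nn.
  have [U [UL0 Uz]] : V z by case: zc => ->; apply: W_tube.
  by exists U; split => //; apply: List.in_or_app; left.
have [U [UL1 Uz]] := L1_cover z zs.
by exists U; split => //; apply: List.in_or_app; right.
Qed.

End ConvergentSequence.

Section SequenceTopology.
Variables (G : zmodType) (a : nat -> G).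

Definition tail_set (p : nat) : gset G :=
  fun z => z = 0 \/ exists n, (p <= n)%N /\ (z = a n \/ z = - a n).

Fixpoint tail_sum (m : nat -> nat) (i k : nat) : gset G :=
  match k with
  | 0 => fun z => z = 0
  | k.+1 => fun z => exists x y, [/\ tail_set (m i) x, tail_sum m i.+1 k y & z = x + y]
  end.

(* U(m) = the union over k of tail_set (m 0) + ... + tail_set (m (k-1)); these
   sets form a base at 0 of the group topology generated by a_n -> 0. *)
Definition Unbhd (m : nat -> nat) : gset G := fun z => exists k, tail_sum m 0 k z.

(* dbl m is chosen so that U(dbl m) + U(dbl m) is contained in U(m). *)
Definition dbl (m : nat -> nat) : nat -> nat := fun i => maxn (m i.*2) (m i.*2.+1).

Lemma tail_set_opp p x : tail_set p x -> tail_set p (- x).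
Proof.
move=> [->|[n [pn [->|->]]]]; first by left; rewrite oppr0.
- by right; exists n; split => //; right.
- by right; exists n; split => //; left; rewrite opprK.
Qed.

Lemma tail_set_mono p q x : (p <= q)%N -> tail_set q x -> tail_set p x.
Proof.
move=> pq [->|[n [qn H]]]; first by left.
by right; exists n; split => //; apply: leq_trans qn.
Qed.

Lemma tail_sum0 m i k : tail_sum m i k 0.
Proof.
by elim: k i => [|k IH] i //=; exists 0, 0; split => //; [left|rewrite addr0].
Qed.

Lemma tail_sum_opp m i k x : tail_sum m i k x -> tail_sum m i k (- x).
Proof.
elim: k i x => [|k IH] i x /=; first by move=> ->; rewrite oppr0.
move=> [u [v [Au Av ->]]]; exists (- u), (- v); split; [exact: tail_set_opp|exact: IH|].
by rewrite opprD.
Qed.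

Lemma tail_sum_pad m i k l x : tail_sum m i k x -> tail_sum m i (k + l) x.
Proof.
elim: k i x => [|k IH] i x /=; first by move=> ->; apply: tail_sum0.
by move=> [u [v [Au Av ->]]]; exists u, v; split => //; apply: IH.
Qed.

Lemma tail_sum_split m i k l z : tail_sum m i (k + l) z ->
  exists s t, [/\ tail_sum m i k s, tail_sum m (i + k) l t & z = s + t].
Proof.
elim: k i z => [|k IH] i z /=.
  by move=> Hz; exists 0, z; split => //; [rewrite addn0|rewrite add0r].
move=> [u [v [Au /IH [s [t [Hs Ht ->]]] ->]]].
exists (u + s), t; split; [by exists u, s|by rewrite addnS -addSn|by rewrite addrA].
Qed.

Lemma tail_sum_Asum m i k z : tail_sum m i k z -> Asum a k z.
Proof.
elim: k i z => [|k IH] i z //= [u [v [[->|[n [_ un]]] /IH Av ->]]].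
  by exists 0, v; split => //; left.
by exists u, v; split => //; right; exists n.
Qed.

Lemma tail_sum_mono m m' i k z : (forall j, (m j <= m' j)%N) ->
  tail_sum m' i k z -> tail_sum m i k z.
Proof.
move=> mm'; elim: k i z => [|k IH] i z //= [u [v [Au Av ->]]].
by exists u, v; split; [exact: (tail_set_mono (mm' i) Au)|exact: IH|].
Qed.

(* Interleaving two sums for dbl m gives a sum for m of twice the length. *)
Lemma tail_sum_double m i k x y :
  tail_sum (dbl m) i k x -> tail_sum (dbl m) i k y -> tail_sum m i.*2 k.*2 (x + y).
Proof.
elim: k i x y => [|k IH] i x y /=; first by move=> -> ->; rewrite addr0.
move=> [u [v [Au Av ->]]] [u' [v' [Au' Av' ->]]].
exists u, (u' + (v + v')); split.
- exact: (tail_set_mono (leq_maxl _ _) Au).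
- exists u', (v + v'); split; [exact: (tail_set_mono (leq_maxr _ _) Au')| |by []].
  by rewrite -doubleS; apply: IH.
- by rewrite -!addrA [v + (u' + v')]addrCA.
Qed.

Lemma Unbhd0 m : Unbhd m 0.
Proof. by exists 0%N. Qed.

Lemma Unbhd_opp m x : Unbhd m x -> Unbhd m (- x).
Proof. by move=> [k Hk]; exists k; apply: tail_sum_opp. Qed.

Lemma Unbhd_double m x y : Unbhd (dbl m) x -> Unbhd (dbl m) y -> Unbhd m (x + y).
Proof.
move=> [k Hk] [l Hl]; exists (maxn k l).*2.
rewrite -[0%N]/(0.*2)%N; apply: tail_sum_double.
- by rewrite -(subnKC (leq_maxl k l)); apply: tail_sum_pad.
- by rewrite -(subnKC (leq_maxr k l)); apply: tail_sum_pad.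
Qed.

Lemma Unbhd_sub m x y : Unbhd (dbl m) x -> Unbhd (dbl m) y -> Unbhd m (x - y).
Proof. by move=> Ux Uy; apply: Unbhd_double => //; apply: Unbhd_opp. Qed.

(* The open sets of the topology with neighbourhood base {x + U(m)} at x. *)
Definition Uopen : gset (gset G) :=
  fun W => forall x, W x -> exists m, forall u, Unbhd m u -> W (x + u).

(* The interior of c + U(m): the z such that z + U(m') lies in c + U(m). *)
Definition Uball (m : nat -> nat) (c : G) : gset G :=
  fun z => exists m', forall u, Unbhd m' u -> Unbhd m (z + u - c).

Lemma Uball_open m c : Uopen (Uball m c).
Proof.
move=> z [m' Hm']; exists (dbl m') => u Hu; exists (dbl m') => u' Hu'.
by rewrite -[z + u + u']addrA; apply: Hm'; apply: Unbhd_double.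
Qed.

Lemma Uball_center m c : Uball m c c.
Proof.
exists (dbl m) => u Hu; rewrite addrC addKr -[u]addr0.
by apply: Unbhd_double => //; apply: Unbhd0.
Qed.

Lemma Uball_sub m c z : Uball m c z -> Unbhd m (z - c).
Proof. by move=> [m' Hm']; rewrite -[z]addr0; apply: Hm'; apply: Unbhd0. Qed.

Lemma Uopen_group : group_topology Uopen.
Proof.
split; first split.
- by move=> x _; exists (fun _ => 0%N).
- split.
  + move=> U V HU HV x [Ux Vx].
    have [m1 H1] := HU x Ux; have [m2 H2] := HV x Vx.
    exists (fun i => maxn (m1 i) (m2 i)) => u [k Hk]; split.
    * by apply: H1; exists k; apply: (tail_sum_mono _ Hk) => j; apply: leq_maxl.
    * by apply: H2; exists k; apply: (tail_sum_mono _ Hk) => j; apply: leq_maxr.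
  + move=> F HF x [U [FU Ux]].
    have [m Hm] := HF U FU x Ux.
    by exists m => u Hu; exists U; split => //; apply: Hm.
- move=> x y W HW Wxy.
  have [m Hm] := HW _ Wxy.
  exists (Uball (dbl m) x), (Uball (dbl m) y).
  split; [exact: Uball_open|exact: Uball_open|exact: Uball_center|exact: Uball_center|].
  move=> u v /Uball_sub Hu /Uball_sub Hv.
  have := Hm _ (Unbhd_sub Hu Hv); congr W.
  by rewrite opprB addrCA [x - y + _]addrA subrK [u - x + _]addrA subrK.
Qed.

Lemma Uopen_converges : converges Uopen a 0.
Proof.
move=> W HW W0; have [m Hm] := HW 0 W0.
exists (m 0%N) => n Hn; rewrite -[a n]add0r; apply: Hm.
exists 1%N; exists (a n), 0; split => //; last by rewrite addr0.
by right; exists n; split => //; left.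
Qed.

Lemma tau_Uball (O : gset (gset G)) m c : is_tau a O -> O (Uball m c).
Proof.
move=> [_ _ tau_finest].
by apply: (tau_finest Uopen); [exact: Uopen_group|exact: Uopen_converges|exact: Uball_open].
Qed.

End SequenceTopology.

Lemma uncovered_sequence (G : zmodType) (a : nat -> G) (X : gset G) :
  ~ (exists (s : seq G) n, forall z, X z -> plus_set (of_seq s) (Asum a n) z) ->
  exists x : nat -> G, (forall n, X (x n)) /\
    forall j n, (j < n)%N -> ~ Asum a n (x n - x j).
Proof.
move=> uncovered.
have bad (s : seq G) n : exists z, X z /\ ~ plus_set (of_seq s) (Asum a n) z.
  apply: NNPP => none; apply: uncovered; exists s, n => z Xz.
  by apply: NNPP => nz; apply: none; exists z.
have [pick pick_spec] := choice (fun (p : seq G * nat) z =>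
  X z /\ ~ plus_set (of_seq p.1) (Asum a p.2) z) (fun p => bad p.1 p.2).
pose fix prefix n := if n is n'.+1 then rcons (prefix n') (pick (prefix n', n')) else [::].
pose x n := pick (prefix n, n).
have prefix_mem j n : (j < n)%N -> x j \in prefix n.
  elim: n => [|n IH] //; rewrite ltnS leq_eqVlt => /orP [/eqP ->|jn] /=.
    by rewrite mem_rcons mem_head.
  by rewrite mem_rcons in_cons (IH jn) orbT.
exists x; split => [n|j n jn An]; first by case: (pick_spec (prefix n, n)).
case: (pick_spec (prefix n, n)) => _; apply; exists (x j), (x n - x j).
by split; [exact: prefix_mem|exact: An|rewrite addrC subrK].
Qed.

Section PrecompactCover.
Variables (G : zmodType) (a : nat -> G) (O : gset (gset G)).
Hypotheses (O_tau : is_tau a O) (O_T2 : hausdorff O).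

Let O_group : group_topology O. Proof. by case: O_tau. Qed.
Let a0 : converges O a 0. Proof. by case: O_tau. Qed.

Lemma tail_sum_in_chain (Z : nat -> gset G) m :
  (forall n, Z n 0 /\ forall u v, Z n.+1 u -> Z n.+1 v -> Z n (u + v)) ->
  (forall n z, tail_set a (m n) z -> Z n z) ->
  forall l n t, tail_sum a m n l t -> exists u v, [/\ Z n u, Z n v & t = u + v].
Proof.
move=> Z_chain tail_Z; elim=> [|l IH] n t /=.
  by move=> ->; exists 0, 0; have [Z0 _] := Z_chain n; rewrite addr0.
move=> [y [t' [Ay /IH [u [v [Zu Zv ->]]] ->]]].
exists y, (u + v); split => //; first exact: tail_Z.
by apply: (Z_chain n).2.
Qed.

Lemma separating_Unbhd (x : nat -> G) :
  (forall j n, (j < n)%N -> ~ Asum a n (x n - x j)) ->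
  exists m, forall j n, (j < n)%N -> ~ Unbhd a m (x n - x j).
Proof.
move=> x_apart.
have [W W_spec] : exists W : nat -> gset G, forall n, [/\ O (W n), W n 0 &
    forall j w, (j < n)%N -> W n w -> ~ Asum a n (x n - x j - w)].
  apply: (choice (fun n W => [/\ O W, W 0 &
    forall j w, (j < n)%N -> W w -> ~ Asum a n (x n - x j - w)])) => n /=.
  apply: (@finite_inter_nbhd _ O O_group (fun j w => ~ Asum a n (x n - x j - w))) => j jn.
  by apply: (Asum_closed O_group a0 O_T2); apply: x_apart.
have [|Z Z_spec] := @halving_chain _ O O_group W _.
  by move=> n; have [OW W0 _] := W_spec n.
have [m m_spec] : exists m : nat -> nat,
    forall n k, (m n <= k)%N -> Z n (a k) /\ Z n (- a k).
  apply: (choice (fun n N => forall k, (N <= k)%N -> Z n (a k) /\ Z n (- a k))) => n /=.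
  by have [OZ Z0 _ _] := Z_spec n; exact (converges_pm O_group a0 OZ Z0).
have tail_Z n z : tail_set a (m n) z -> Z n z.
  move=> [->|[k [mk [->|->]]]]; first by case: (Z_spec n).
  - by case: (m_spec n k mk).
  - by case: (m_spec n k mk).
have Z_chain n : Z n 0 /\ forall u v, Z n.+1 u -> Z n.+1 v -> Z n (u + v).
  by case: (Z_spec n).
exists m => j n jn [k /(tail_sum_pad n)]; rewrite addnC => /tail_sum_split.
move=> [s [t [Hs /(tail_sum_in_chain Z_chain tail_Z) [u [v [Zu Zv ->]]] xnj]]].
have [_ _ W_sep] := W_spec n.
apply: (W_sep j (u + v) jn); first by have [_ _ ZZ _] := Z_spec n; apply: ZZ.
by rewrite xnj addrK; apply: tail_sum_Asum Hs.
Qed.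

(* Conversely, any sequence in a precompact set has two terms x_j, x_n
   (j < n) with x_n - x_j in U(m): cover the closure by the open sets
   Uball (dbl m) c and apply the pigeonhole principle. *)
Lemma precompact_close_pair (X : gset G) (x : nat -> G) m :
  precompact O X -> (forall n, X (x n)) ->
  exists j n, (j < n)%N /\ Unbhd a m (x n - x j).
Proof.
move=> X_pc Xx.
pose F V := exists c, V = Uball a (dbl m) c.
have F_open : forall V, F V -> O V by move=> V [c ->]; apply: tau_Uball.
have F_cover : forall c, closure O X c -> exists V, F V /\ V c.
  by move=> c _; exists (Uball a (dbl m) c); split; [exists c|apply: Uball_center].
have [s [sF s_cover]] := X_pc F F_open F_cover.
have [|j [n [V [jn Vs Vj Vn]]]] := @pigeonhole _ s x 0%N.
  by move=> n _; apply: s_cover => U OU Ux; exists (x n).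
have [c Vc] := sF V Vs; rewrite Vc in Vj Vn.
exists j, n; split => //.
have := Unbhd_sub (Uball_sub Vn) (Uball_sub Vj).
by rewrite opprB addrA subrK.
Qed.

Lemma precompact_cover (X : gset G) : precompact O X ->
  exists (s : seq G) n, forall z, X z -> plus_set (of_seq s) (Asum a n) z.
Proof.
move=> X_pc; apply: NNPP => /uncovered_sequence [x [Xx x_apart]].
have [m m_sep] := separating_Unbhd x_apart.
have [j [n [jn close]]] := precompact_close_pair m X_pc Xx.
exact: m_sep j n jn close.
Qed.

End PrecompactCover.

Section Ideals.
Variables (G : zmodType) (a : nat -> G) (O : gset (gset G)).
Hypotheses (O_tau : is_tau a O) (O_T2 : hausdorff O).

Let O_top : is_topology O. Proof. by case: O_tau => [[]]. Qed.

Lemma precompact_plus_Asum (s : seq G) n : precompact O (plus_set (of_seq s) (Asum a n)).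
Proof.
case: O_tau => O_group a0 _.
exact: precompact_of_compact O_top O_T2 (compact_plus_Asum O_group a0 (k := n) (s := s)) _.
Qed.

Lemma precompact_ideal : group_ideal (precompact O).
Proof.
split.
- move=> X /finite_of_seq [s ->].
  apply: (precompact_subset O_top O_T2 (precompact_plus_Asum (s := s) (n := 0%N))) => z zs.
  by exists z, 0; split => //; rewrite addr0.
- move=> A B /(precompact_cover O_tau O_T2) [sA [nA A_cover]].
  move=> /(precompact_cover O_tau O_T2) [sB [nB B_cover]].
  apply: (precompact_subset O_top O_T2
    (precompact_plus_Asum (s := [seq f - g | f <- sA, g <- sB]) (n := (nA + nB)%N))).
  move=> _ [x [y [/A_cover [f [u [fs Au ->]]] /B_cover [g [v [gs Bv ->]]] ->]]].
  exists (f - g), (u - v); split.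
  + exact: (allpairs_f (fun f g => f - g)).
  + by apply: Asum_add => //; apply: Asum_opp.
  + by rewrite opprD addrACA.
- by move=> A C A_pc CA; apply: (precompact_subset O_top O_T2 A_pc).
Qed.

End Ideals.

Lemma ideal_plus_Asum (G : zmodType) (a : nat -> G) (I : gset (gset G)) (s : seq G) n :
  group_ideal I -> I (fun z => z = 0 \/ exists n, z = a n) ->
  I (plus_set (of_seq s) (Asum a n)).
Proof.
move=> [I_fin I_sub I_incl] I_a.
have I0 : I (fun z => z = 0).
  by apply: I_fin; exists [:: 0] => z; rewrite inE; split => [->|/eqP].
have I_plus A B : I A -> I B -> I (plus_set A B).
  move=> IA IB; apply: (I_incl _ _ (I_sub _ _ IA (I_sub _ _ I0 IB))).
  move=> _ [x [y [Ax By ->]]].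
  by exists x, (0 - y); split => //; [exists 0, y|rewrite sub0r opprK].
have IA : I (Aset a).
  apply: (I_incl _ _ (I_sub _ _ I_a I_a)) => z [->|[k [->|->]]].
  - by exists 0, 0; split => //; [left|left|rewrite subr0].
  - by exists (a k), 0; split => //; [right; exists k|left|rewrite subr0].
  - by exists 0, (a k); split => //; [left|right; exists k|rewrite sub0r].
have I_Asum k : I (Asum a k) by elim: k => [|k IH] //; apply: I_plus.
by apply: I_plus => //; apply: I_fin; exists s.
Qed.

Lemma precompact_S_ideal (G : zmodType) (a : nat -> G) (O : gset (gset G)) :
  is_tau a O -> hausdorff O -> forall X, precompact O X <-> S_ideal O X.
Proof.
move=> O_tau O_T2 X; have [[O_top _] a0 _] := O_tau; split.
- move=> /(precompact_cover O_tau O_T2) [s [n X_cover]] I I_ideal I_conv.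
  have [_ _ I_incl] := I_ideal.
  exact: I_incl _ _ (ideal_plus_Asum s n I_ideal (I_conv a 0 a0)) X_cover.
- move=> X_S; apply: X_S; first exact: precompact_ideal O_tau O_T2.
  move=> s l s_l.
  exact: precompact_of_compact O_top O_T2 (convergent_compact s_l) (fun z z_in => z_in).
Qed.

Lemma generated_plus_Asum (G : zmodType) (a : nat -> G) (s : seq G) n :
  generated_by a -> exists K, forall z, plus_set (of_seq s) (Asum a n) z -> Asum a K z.
Proof.
move=> a_gen.
have in_Asum : forall x, exists k, Asum a k x.
  apply: a_gen; first by exists 0%N.
    move=> x y [k Ax] [j Ay]; exists (k + j)%N.
    by apply: Asum_add => //; apply: Asum_opp.
  by move=> n'; exists 1%N, (a n'), 0; split => //; [right; exists n'; left|rewrite addr0].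
have [K s_K] : exists K, forall f, f \in s -> Asum a K f.
  elim: s => [|f s [K s_K]]; first by exists 0%N.
  have [k Af] := in_Asum f.
  exists (maxn k K) => g; rewrite inE => /orP [/eqP ->|gs].
  + exact: Asum_mono (leq_maxl k K) Af.
  + exact: Asum_mono (leq_maxr k K) (s_K g gs).
exists (K + n)%N => _ [f [u [fs Au ->]]].
exact: Asum_add (s_K f fs) Au.
Qed.

(* The topology tau(a_n) of a T-sequence is Hausdorff, being finer than a
   Hausdorff group topology in which a_n -> 0. *)
Lemma tau_hausdorff (G : zmodType) (a : nat -> G) (O : gset (gset G)) :
  T_sequence a -> is_tau a O -> hausdorff O.
Proof.
move=> [O' [O'_group O'_T2 a0']] [_ _ tau_finest] x y xy.
have [U [V [OU OV Ux Vy UV]]] := O'_T2 x y xy.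
by exists U, V; split => //; apply: (tau_finest O').
Qed.

Unset Implicit Arguments.
Set Strict Implicit.

Theorem theorem1 (G : zmodType) (a : nat -> G) (O : gset (gset G)) :
  T_sequence a -> is_tau a O ->
  ((forall F n, finite_set F -> precompact O (plus_set F (Asum a n))) /\
   (forall X, precompact O X ->
      exists F n, finite_set F /\ forall z, X z -> plus_set F (Asum a n) z) /\
   (forall X, precompact O X <-> S_ideal O X)) /\
  (generated_by a ->
     (forall n, precompact O (Asum a n)) /\
     (forall X, precompact O X -> exists n, forall z, X z -> Asum a n z)).
Proof.
move=> a_T O_tau; have O_T2 := tau_hausdorff a_T O_tau.
have [[O_top _] _ _] := O_tau.
have FA_pc F n : finite_set F -> precompact O (plus_set F (Asum a n)).
  by move=> /finite_of_seq [s ->]; apply: precompact_plus_Asum.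
split; [split; [exact: FA_pc|split]|move=> a_gen; split].
- move=> X /(precompact_cover O_tau O_T2) [s [n X_cover]].
  by exists (of_seq s), n; split => //; exists s.
- exact: precompact_S_ideal O_tau O_T2.
- move=> n; have FA0 := precompact_plus_Asum O_tau O_T2 (s := [:: 0]) (n := n).
  apply: (precompact_subset O_top O_T2 FA0) => z Az.
  by exists 0, z; split => //; [rewrite /of_seq inE|rewrite add0r].
- move=> X /(precompact_cover O_tau O_T2) [s [n X_cover]].
  have [K FA_K] := generated_plus_Asum s n a_gen.
  by exists K => z /X_cover /FA_K.
Qed.
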